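(* Let $X$ be a compactum, $Y$ a compactum in the Hilbert cube $I^\infty$, and $Y_1\supset Y_2\supset\cdots$ compact neighbourhoods of $Y$ in $I^\infty$ which are prisms, with $\bigcap_kY_k=Y$ and $p_k:Y_{k+1}\to Y_k$ the inclusions. Given an approximative map $\{f_k\}_{k\in\mathbb{N}}$ with $f_k:X\to Y_k$, there exists an approximative map $\{f'_k\}_{k\in\mathbb{N}}$ with $f'_k:X\to Y_k$ such that $p_k\circ f'_{k+1}\simeq f'_k$ in $Y_k$ for all $k\in\mathbb{N}$ and $\{f_k\}\simeq\{f'_k\}$.
   Context: A compactum is a compact metric space. A prism is a space homeomorphic to $P\times I^\infty$ with $P$ a compact polyhedron. An approximative map of $X$ towards $Y$ (relative to $(Y_k)$) is a sequence of continuous maps $f_k:X\to Y_k$ such that for every $N$ there is $m(N)$ with $p_t\circ f_{t+1}\simeq f_t$ in $Y_N$ (i.e. homotopic as maps into $Y_N$) for all $t\ge m(N)$. Two approximative maps $\{f_k\},\{g_k\}$ are homotopic, $\{f_k\}\simeq\{g_k\}$, if for every neighbourhood $V$ of $Y$ in $I^\infty$ there is $k_0$ with $f_k\simeq g_k$ in $V$ for all $k\ge k_0$. *)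

From HB Require Import structures.
From mathcomp Require Import all_boot all_order all_algebra.
From mathcomp Require Import all_classical all_reals all_analysis.
Set Implicit Arguments. Unset Strict Implicit. Unset Printing Implicit Defensive.
Import Order.TTheory GRing.Theory Num.Theory.
Import numFieldTopology.Exports numFieldNormedType.Exports.
Local Open Scope classical_set_scope.
Local Open Scope ring_scope.

(** Ambient space of the Hilbert cube: real sequences with the product
    (pointwise) topology. *)
Notation seqR R := {ptws nat -> R}.

Definition hilbert_cube (R : realType) : set (seqR R) :=
  [set y | forall n : nat, 0 <= y n <= 1].
Arguments hilbert_cube R : clear implicits.

Definition cube_nbhs (R : realType) (A V : set (seqR R)) : Prop :=
  V `<=` hilbert_cube R /\
  exists O : set (seqR R), open O /\ A `<=` O /\ O `&` hilbert_cube R `<=` V.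

Definition conv_hull (R : realType) (n : nat) (s : seq 'rV[R]_n) : set 'rV[R]_n :=
  [set x | exists lam : 'I_(size s) -> R,
     (forall i, 0 <= lam i) /\ \sum_(i < size s) lam i = 1 /\
     x = \sum_(i < size s) lam i *: s`_i].

Definition compact_polyhedron (R : realType) (n : nat) (P : set 'rV[R]_n) : Prop :=
  exists cells : seq (seq 'rV[R]_n),
    P = \bigcup_(c in [set c | c \in cells]) conv_hull c.

Definition homeomorphic_sets (U V : topologicalType) (S : set U) (T : set V) : Prop :=
  exists (h : U -> V) (g : V -> U),
    {within S, continuous h} /\ {within T, continuous g} /\
    (forall x, S x -> T (h x)) /\ (forall y, T y -> S (g y)) /\
    (forall x, S x -> g (h x) = x) /\ (forall y, T y -> h (g y) = y).

Definition prism (R : realType) (S : set (seqR R)) : Prop :=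
  exists (n : nat) (P : set 'rV[R]_n),
    compact_polyhedron P /\
    homeomorphic_sets S (P `*` hilbert_cube R : set ('rV[R]_n * seqR R)).

Definition map_into (R : realType) (X : topologicalType) (f : X -> seqR R)
  (B : set (seqR R)) : Prop :=
  continuous f /\ forall x, B (f x).

Definition homotopic_in (R : realType) (X : topologicalType) (f g : X -> seqR R)
  (B : set (seqR R)) : Prop :=
  exists H : X * R -> seqR R,
    {within [set: X] `*` `[0, 1]%classic, continuous H} /\
    (forall x, H (x, 0) = f x) /\ (forall x, H (x, 1) = g x) /\
    (forall x t, `[0, 1]%classic t -> B (H (x, t))).

(** Approximative map of X towards Y relative to (Ys k); the inclusions
    p_t : Ys (t+1) -> Ys t are implicit (p_t o f_(t+1) = f_(t+1)). *)
Definition approximative_map (R : realType) (X : topologicalType)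
  (Ys : nat -> set (seqR R)) (f : nat -> X -> seqR R) : Prop :=
  (forall k, map_into (f k) (Ys k)) /\
  forall N : nat, exists m : nat, forall t : nat, (m <= t)%N ->
    homotopic_in (f t.+1) (f t) (Ys N).

Definition approx_homotopic (R : realType) (X : topologicalType)
  (Y : set (seqR R)) (f g : nat -> X -> seqR R) : Prop :=
  forall V : set (seqR R), cube_nbhs Y V ->
    exists k0 : nat, forall k : nat, (k0 <= k)%N -> homotopic_in (f k) (g k) V.

(** Since every neighbourhood of [Y] in the Hilbert cube contains some [Ys N]
    (the [Ys k] are compact and decrease to [Y]), it suffices to pass to a
    subsequence [f' k := f (n k)] with [n] nondecreasing and [n k] above both
    [k] and the index [m k] from which consecutive maps are homotopic in
    [Ys k]: chaining these homotopies shows [f' k.+1 ~ f' k] in [Ys k], and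
    [f k ~ f (n k)] in [Ys N] as soon as [m N <= k]. *)
From HB Require Import structures.
From mathcomp Require Import all_boot all_order all_algebra.
From mathcomp Require Import all_classical all_reals all_analysis.
From mathcomp Require Import lra zify.
Set Implicit Arguments. Unset Strict Implicit. Unset Printing Implicit Defensive.
Import Order.TTheory GRing.Theory Num.Theory.
Import numFieldTopology.Exports numFieldNormedType.Exports.
Local Open Scope classical_set_scope.
Local Open Scope ring_scope.

Lemma within_continuous_precomp {T S U : topologicalType} (A : set T) (B : set S)
    (f : T -> U) (g : S -> T) :
  {within A, continuous f} -> continuous g -> (forall x, B x -> A (g x)) ->
  {within B, continuous (f \o g)}.
Proof.
move=> cf cg gBA; apply/subspace_continuousP => x Bx.
have Hf := (proj1 (@subspace_continuousP _ A _ f) cf) (g x) (gBA x Bx).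
move=> P /Hf; rewrite /within /= !nbhs_simpl /= => HP.
have : (g @ nbhs x) [set y | A y -> f y \in P].
  by apply: cg; apply: filterS HP => y Hy Ay; rewrite inE; exact: Hy.
rewrite /= nbhs_simpl; apply: filterS => z Hz Bz; have := Hz (gBA _ Bz).
by rewrite inE.
Qed.

Lemma continuous_affine_snd {R : realType} {X : topologicalType} (a b : R) :
  continuous (fun p : X * R => (p.1, a * p.2 + b)).
Proof.
move=> q.
have affine_snd : (fun p : X * R => a * p.2 + b) @ nbhs q --> a * q.2 + b.
  by apply: cvgD; [apply: cvgM; [exact: cvg_cst | exact: cvg_snd] | exact: cvg_cst].
exact: cvg_pair (@cvg_fst _ _ _ _ _) affine_snd.
Qed.

Lemma closed_setT_itv {R : realType} {X : topologicalType} (a b : R) :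
  closed ([set: X] `*` `[a, b]%classic).
Proof.
have -> : [set: X] `*` `[a, b]%classic = (@snd X R) @^-1` `[a, b]%classic.
  by apply/seteqP; split => -[x t] /=; [case|split].
apply: (proj1 (continuous_closedP _)); first by move=> q; exact: cvg_snd.
exact: (@interval_closed R (BLeft a) (BRight b)).
Qed.

Lemma setT_itv_split {R : realType} {X : Type} (a c b : R) :
  a <= c -> c <= b ->
  [set: X] `*` `[a, b]%classic =
    ([set: X] `*` `[a, c]%classic) `|` ([set: X] `*` `[c, b]%classic).
Proof.
move=> ac cb; apply/seteqP; split => -[x t] /=.
  move=> [_]; rewrite ?in_itv /= => /andP[? ?].
  have [?|?] := lerP t c.
    by left; split => //; rewrite /= ?in_itv /=; apply/andP; split; lra.
  by right; split => //; rewrite /= ?in_itv /=; apply/andP; split; lra.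
by case=> -[_]; rewrite /= ?in_itv /= => /andP[? ?]; split => //;
  apply/andP; split; lra.
Qed.

Section Homotopy.
Variables (R : realType) (X : topologicalType).
Implicit Types (f g h : X -> seqR R) (B C : set (seqR R)).

Lemma homotopic_in_refl f B : map_into f B -> homotopic_in f f B.
Proof.
move=> [cf fB]; exists (fun p => f p.1); split; last by do 2 split => //.
apply: continuous_subspaceT => q.
exact: (@continuous_comp _ _ _ fst f q (@cvg_fst _ _ _ _ _) (cf q.1)).
Qed.

Lemma homotopic_in_subset f g B C :
  B `<=` C -> homotopic_in f g B -> homotopic_in f g C.
Proof.
move=> BC [H [cH [H0 [H1 HB]]]]; exists H; do 3 split => //.
by move=> x t t01; apply: BC; exact: HB.
Qed.

Lemma homotopic_in_map_into_r f g B :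
  continuous g -> homotopic_in f g B -> map_into g B.
Proof.
move=> cg [H [_ [_ [H1 HB]]]]; split => // x.
rewrite -H1; apply: HB; rewrite /= in_itv /=; apply/andP; split; lra.
Qed.

Lemma homotopic_in_sym f g B : homotopic_in f g B -> homotopic_in g f B.
Proof.
move=> [H [cH [H0 [H1 HB]]]].
exists (H \o (fun p : X * R => (p.1, -1 * p.2 + 1))); split.
  apply: (within_continuous_precomp cH); first exact: continuous_affine_snd.
  move=> [x t] /= [_ /=]; rewrite !in_itv /= => /andP[? ?].
  by split => //=; apply/andP; split; lra.
split; first by move=> x /=; rewrite mulr0 add0r.
split; first by move=> x /=; rewrite mulr1 addNr.
move=> x t /=; rewrite !in_itv /= => /andP[? ?]; apply: HB.
by rewrite /= in_itv /=; apply/andP; split; lra.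
Qed.

Lemma homotopic_in_trans f g h B :
  homotopic_in f g B -> homotopic_in g h B -> homotopic_in f h B.
Proof.
move=> [H1 [cH1 [H10 [H11 HB1]]]] [H2 [cH2 [H20 [H21 HB2]]]].
pose H p := if p.2 <= 1/2 then H1 (p.1, 2 * p.2 + 0) else H2 (p.1, 2 * p.2 + -1).
exists H; split.
  rewrite (@setT_itv_split _ _ 0 (1/2) 1); [|lra..].
  apply: withinU_continuous; [exact: closed_setT_itv..| |].
    apply: (@subspace_eq_continuous _ _ _
       (from_subspace _ (H1 \o (fun p : X * R => (p.1, 2 * p.2 + 0))))).
      move=> [x t]; rewrite inE /= => -[_]; rewrite /= ?in_itv /= => /andP[? ?].
      by rewrite /from_subspace /H /= ifT.
    apply: (within_continuous_precomp cH1); first exact: continuous_affine_snd.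
    move=> [x t] /= [_ /=]; rewrite ?in_itv /= => /andP[? ?].
    by split => //=; apply/andP; split; lra.
  apply: (@subspace_eq_continuous _ _ _
     (from_subspace _ (H2 \o (fun p : X * R => (p.1, 2 * p.2 + -1))))).
    move=> [x t]; rewrite inE /= => -[_]; rewrite /= ?in_itv /= => /andP[? ?].
    rewrite /from_subspace /H /=; case: ifPn => // ?.
    have -> : 2 * t + 0 = 1 by lra.
    have -> : 2 * t + -1 = 0 by lra.
    by rewrite H11 H20.
  apply: (within_continuous_precomp cH2); first exact: continuous_affine_snd.
  move=> [x t] /= [_ /=]; rewrite ?in_itv /= => /andP[? ?].
  by split => //=; apply/andP; split; lra.
split.
  move=> x; rewrite /H /= ifT; last lra.
  by have -> : 2 * 0 + 0 = 0 :> R by lra.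
split.
  move=> x; rewrite /H /= ifF; last by apply/negbTE; rewrite -ltNge; lra.
  by have -> : 2 * 1 + -1 = 1 :> R by lra.
move=> x t; rewrite /= ?in_itv /= => /andP[? ?]; rewrite /H /=.
case: ifPn => ?.
  by apply: HB1; rewrite /= ?in_itv /=; apply/andP; split; lra.
by apply: HB2; rewrite /= ?in_itv /=; apply/andP; split; lra.
Qed.

Lemma homotopic_in_chain (f : nat -> X -> seqR R) B m :
  (forall t, continuous (f t)) ->
  (forall t, (m <= t)%N -> homotopic_in (f t.+1) (f t) B) ->
  forall a b, (m <= a)%N -> (a <= b)%N -> homotopic_in (f b) (f a) B.
Proof.
move=> cf hf a b ma /subnK <-; elim: (b - a)%N => [|d IH].
  exact/homotopic_in_refl/(homotopic_in_map_into_r (cf _) (hf _ ma)).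
by apply: homotopic_in_trans (hf _ _) IH; lia.
Qed.

End Homotopy.

Lemma decreasing_setsW {T : Type} (A : nat -> set T) :
  (forall k, A k.+1 `<=` A k) -> forall i j, (i <= j)%N -> A j `<=` A i.
Proof.
move=> decrA i j /subnK <-; elim: (j - i)%N => [|d IH] //.
exact: subset_trans (decrA _) IH.
Qed.

Lemma decreasing_compact_subset_open {T : ptopologicalType}
    (K : nat -> set T) (W : set T) :
  hausdorff_space T -> (forall k, compact (K k)) ->
  (forall k, K k.+1 `<=` K k) -> open W -> \bigcap_k K k `<=` W ->
  exists N, K N `<=` W.
Proof.
move=> hsT cK decrK oW capW.
have K0_cover : cover_compact (K 0%N) by rewrite -compact_cover.
have [|x K0x|D _ covD] := K0_cover nat setT
    (fun i => if i is k.+1 then ~` K k else W).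
- by move=> [|k] _ //; apply: closed_openC; exact: compact_closed.
- have [Wx|nWx] := pselect (W x); first by exists 0%N.
  apply: contrapT => nocover; apply/nWx/capW => k _.
  by apply: contrapT => nKx; apply: nocover; exists k.+1.
exists (\max_(i <- finmap.enum_fset D) i)%N => x KNx.
have [[|k] kD //] := covD x (decreasing_setsW decrK (leq0n _) KNx).
case; apply: (decreasing_setsW decrK _ KNx).
by apply: (leq_trans (leqnSn k)); exact: (@leq_bigmax_seq nat _ xpredT id _ kD).
Qed.

(** [compact_cover] is only available for pointed spaces. *)
Definition pointed_seqR (R : realType) := seqR R.
HB.instance Definition _ (R : realType) := Topological.on (pointed_seqR R).
HB.instance Definition _ (R : realType) :=
  isPointed.Build (pointed_seqR R) (fun _ => 0).

Lemma cube_nbhs_contains_decreasing (R : realType) (Y V : set (seqR R))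
    (Ys : nat -> set (seqR R)) :
  (forall k, compact (Ys k)) -> (forall k, Ys k `<=` hilbert_cube R) ->
  (forall k, Ys k.+1 `<=` Ys k) -> \bigcap_k Ys k = Y ->
  cube_nbhs Y V -> exists N, Ys N `<=` V.
Proof.
move=> cYs cubeYs decrYs capY [_ [W [oW [YW WV]]]].
have hsT : hausdorff_space (pointed_seqR R).
  by apply: hausdorff_product => _; exact: Rhausdorff.
have [|N YsNW] := @decreasing_compact_subset_open (pointed_seqR R) Ys W
  hsT cYs decrYs oW; first by rewrite capY.
by exists N => x YsNx; apply: WV; split; [exact: YsNW | exact: (cubeYs N)].
Qed.

Lemma nondecreasing_majorant (m : nat -> nat) :
  exists n : nat -> nat, [/\ forall k, (k <= n k)%N, forall k, (m k <= n k)%N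
    & forall k, (n k <= n k.+1)%N].
Proof.
exists (fun k => k + \sum_(i < k.+1) m i)%N; split => k.
- exact: leq_addr.
- by rewrite big_ord_recr /= addnA leq_addl.
- by rewrite [X in (_ <= _ + X)%N]big_ord_recr /=; lia.
Qed.

Theorem proposition9p1 (R : realType) (X : pseudoMetricType R)
  (Y : set (seqR R)) (Ys : nat -> set (seqR R)) (f : nat -> X -> seqR R) :
  hausdorff_space X -> compact [set: X] ->
  compact Y -> Y `<=` hilbert_cube R ->
  (forall k, compact (Ys k)) -> (forall k, cube_nbhs Y (Ys k)) ->
  (forall k, prism (Ys k)) ->
  (forall k, Ys k.+1 `<=` Ys k) ->
  \bigcap_k Ys k = Y ->
  approximative_map Ys f ->
  exists f' : nat -> X -> seqR R,
    approximative_map Ys f' /\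
    (forall k, homotopic_in (f' k.+1) (f' k) (Ys k)) /\
    approx_homotopic Y f f'.
Proof.
move=> _ _ _ _ cYs nbhsYs _ decrYs capY [f_maps f_approx].
have [m hm] := choice f_approx.
have cf t : continuous (f t) by case: (f_maps t).
have [n [kn mn nS]] := nondecreasing_majorant m.
have f_n_step k : homotopic_in (f (n k.+1)) (f (n k)) (Ys k).
  exact: (homotopic_in_chain cf (hm k) (mn k) (nS k)).
exists (f \o n); split; [split|split] => //.
- move=> k; split => [|x]; first exact: cf.
  exact: (decreasing_setsW decrYs (kn k) (proj2 (f_maps _) x)).
- move=> N; exists N => t Nt; apply: homotopic_in_subset (f_n_step t).
  exact: decreasing_setsW.
move=> V nbhsV.
have [N YsNV] := cube_nbhs_contains_decreasing cYs
  (fun k => proj1 (nbhsYs k)) decrYs capY nbhsV.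
exists (m N) => k mNk; apply/homotopic_in_sym/(homotopic_in_subset YsNV).
exact: (homotopic_in_chain cf (hm N) mNk (kn k)).
Qed.
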